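(* Let $\mathcal{V}$ be the complex vector space spanned by $\phi_k(x)=(x\frac{d}{dx})^k\big(\frac{1}{1-x}\big)$, $k\in\mathbb{N}=\{0,1,2,\dots\}$. If a nonzero $f\in\mathcal{V}$ is an eigenfunction of $U_p$ for some integer $p\ge2$, then $f$ is an eigenfunction of $U_q$ for every integer $q\ge2$.
   Context: For a power series $f(x)=\sum_{n\ge0}a_nx^n$ (in particular the Taylor expansion at $0$ of a rational function regular at $0$) and a positive integer $q$, $U_qf(x)=\sum_{n\ge0}a_{qn}x^n$. *)

From HB Require Import structures.
From mathcomp Require Import all_boot all_order all_algebra.
From mathcomp Require Import reals.
From mathcomp.real_closed Require Import complex.
Set Implicit Arguments. Unset Strict Implicit. Unset Printing Implicit Defensive.
Import Order.TTheory GRing.Theory Num.Theory.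
Local Open Scope ring_scope.

(* A (formal) power series sum_n a_n x^n is represented by its coefficient
   sequence a : nat -> C. *)
Definition pseries (C : Type) := nat -> C.

(* The Euler operator x d/dx on power series: sum a_n x^n |-> sum n a_n x^n. *)
Definition theta {C : nzRingType} (a : pseries C) : pseries C :=
  fun n => n%:R * a n.

(* Taylor expansion at 0 of 1/(1-x) = sum_n x^n. *)
Definition geom {C : nzRingType} : pseries C := fun _ => 1.

Definition phi {C : nzRingType} (k : nat) : pseries C := iter k theta geom.

Definition inV {C : nzRingType} (f : pseries C) : Prop :=
  exists (m : nat) (c : nat -> C), f = fun n => \sum_(k < m) c k * phi k n.

Definition U {C : Type} (q : nat) (f : pseries C) : pseries C :=
  fun n => f (q * n)%N.

Definition eigenfunction {C : nzRingType} (q : nat) (f : pseries C) : Prop :=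
  (exists n, f n != 0) /\ exists lam : C, U q f = fun n => lam * f n.

From HB Require Import structures.
From mathcomp Require Import all_boot all_order all_algebra.
From mathcomp Require Import reals ring.
From mathcomp.real_closed Require Import complex.
Set Implicit Arguments.
Unset Strict Implicit.
Unset Printing Implicit Defensive.
Import GRing.Theory Num.Theory.
Local Open Scope ring_scope.

(* Since phi_k has coefficients n^k, U_q acts on phi_k by the scalar q^k, and
   the phi_k are linearly independent because a nonzero polynomial has finitely
   many roots.  Comparing coefficients in U_p f = lam f for f = sum_k c_k phi_k
   gives c_k (p^k - lam) = 0; as the p^k are pairwise distinct, only one c_k is
   nonzero, so f is a multiple of a single phi_k and hence an eigenfunction of
   every U_q. *)

Lemma phiE (C : nzRingType) (k n : nat) : @phi C k n = n%:R ^+ k.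
Proof. by elim: k => //= k IHk; rewrite /phi /= in IHk *; rewrite /theta IHk exprS. Qed.

Lemma phiM (C : nzRingType) (k q n : nat) :
  @phi C k (q * n) = q%:R ^+ k * phi k n.
Proof. by rewrite !phiE natrM exprMn_comm //; apply: commr_nat. Qed.

Section LinearIndependence.

Variable R : numDomainType.

Lemma poly_natr_roots_eq0 (P : {poly R}) :
  (forall n : nat, P.[n%:R] = 0) -> P = 0.
Proof.
move=> Proot; apply/eqP; apply: contraT => P_neq0.
have := max_poly_roots P_neq0 (rs := [seq i%:R | i <- iota 0 (size P)]).
rewrite size_map size_iota ltnn; apply.
- by apply/allP => _ /mapP[i _ ->]; apply/rootP.
- by rewrite map_inj_uniq ?iota_uniq // => i j /eqP; rewrite eqr_nat => /eqP.
Qed.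

Lemma sum_phi_eq0 (m : nat) (d : nat -> R) :
  (forall n : nat, \sum_(k < m) d k * phi k n = 0) ->
  forall k, (k < m)%N -> d k = 0.
Proof.
move=> dphi0 k lt_km.
have -> : d k = (\poly_(i < m) d i)`_k by rewrite coef_poly lt_km.
suff -> : \poly_(i < m) d i = 0 by rewrite coef0.
apply: poly_natr_roots_eq0 => n; rewrite horner_poly -[RHS](dphi0 n).
by apply: eq_bigr => i _; rewrite phiE.
Qed.

Lemma U_eigen_sum_phi_support (p m : nat) (c : nat -> R) (lam : R) :
  (1 < p)%N ->
  U p (fun n => \sum_(k < m) c k * phi k n) =
    (fun n => lam * \sum_(k < m) c k * phi k n) ->
  forall k j, (k < m)%N -> (j < m)%N -> c k != 0 -> c j != 0 -> k = j.
Proof.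
move=> p_gt1 eigen.
have coef_eigen k : (k < m)%N -> c k != 0 -> lam = p%:R ^+ k.
  move=> lt_km ck_neq0.
  suff : c k * (p%:R ^+ k - lam) = 0.
    by move/eqP; rewrite mulf_eq0 (negbTE ck_neq0) subr_eq0 eq_sym => /eqP.
  apply: (@sum_phi_eq0 m (fun k => c k * (p%:R ^+ k - lam))) => // n.
  have := congr1 (@^~ n) eigen; rewrite /U => eigen_n.
  rewrite -[RHS](subrr (\sum_(i < m) c i * phi i (p * n))) {2}eigen_n.
  rewrite mulr_sumr -sumrB.
  by apply: eq_bigr => i _; rewrite phiM; ring.
move=> k j lt_km lt_jm ck_neq0 cj_neq0; apply/eqP.
rewrite -(eqn_exp2l _ _ p_gt1) -(eqr_nat R) !natrX.
by rewrite -(coef_eigen _ lt_km ck_neq0) -(coef_eigen _ lt_jm cj_neq0).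
Qed.

End LinearIndependence.

Theorem mainTheorem16 (R : realType) (f : pseries R[i]) (p : nat) :
  inV f -> (2 <= p)%N -> eigenfunction p f ->
  forall q : nat, (2 <= q)%N -> eigenfunction q f.
Proof.
move=> [m [c ->]] p_gt1 [[n0 f_n0] [lam eigen]] q _; split; first by exists n0.
have support := U_eigen_sum_phi_support p_gt1 eigen.
have [[k0 lt_k0m] /= ck0_neq0] : exists k0 : 'I_m, c k0 != 0.
  apply/existsP; apply: contraLR f_n0; rewrite negb_exists => /forallP c0.
  by apply/negPn/eqP/big1 => k _; rewrite (eqP (negPn (c0 k))) mul0r.
exists (q%:R ^+ k0); apply: boolp.funext => n.
rewrite /U mulr_sumr; apply: eq_bigr => [[k lt_km]] _ /=.
have [-> | ck_neq0] := eqVneq (c k) 0; first by rewrite !mul0r mulr0.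
rewrite (support _ _ lt_km lt_k0m ck_neq0 ck0_neq0).
by rewrite phiM mulrCA.
Qed.
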